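(* Let $(P,\mathit{dist})$ be a finite metric space of doubling dimension $d$, let $S\subseteq P$ be non-empty with $n=|S|$, let $\mu\ge 1$ be a real number (possibly depending on $n$), and set $c=2(8\mu)^d$. Assume $n\ge c+1$. Then Algorithm $\mathrm{SepAnn}(S,n,d,\mu,c)$ has expected running time $O(cn)$, and it returns a point $p\in S$ and a real number $R'>0$ such that (1) $|\mathit{ball}_S(p,R')|\ge n/c$, and (2) $|\mathit{ball}_S(p,\mu R')|\le n/2$.
   Context: For $X\subseteq P$, $p\in P$ and $R\ge 0$, $\mathit{ball}_X(p,R)=\{x\in X:\mathit{dist}(p,x)\le R\}$. The doubling dimension of $(P,\mathit{dist})$ is $\log_2\lambda$, where $\lambda$ is the smallest integer such that for every $p\in P$ and real $R>0$, $\mathit{ball}_P(p,R)$ is covered by at most $\lambda$ balls $\mathit{ball}_P(q,R/2)$ with $q\in P$. Distances are obtained from an oracle in $O(1)$ time. Algorithm $\mathrm{SepAnn}(S,n,d,\mu,c)$: repeat the following: choose $p$ uniformly at random from $S$; compute $R_p=\min\{r>0: |\mathit{ball}_S(p,r)|\ge n/c\}$ (as the $\lceil n/c\rceil$-th smallest among the distances from $p$ to all points of $S$, including $p$ itself, using expected-linear-time selection); compute $|\mathit{ball}_S(p,\mu R_p)|$ by scanning these distances; until $|\mathit{ball}_S(p,\mu R_p)|\le n/2$. Then return $p$ and $R'=R_p$. *)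

From HB Require Import structures.
From mathcomp Require Import all_boot all_order all_algebra.
From mathcomp Require Import all_classical all_reals all_analysis.
Set Implicit Arguments. Unset Strict Implicit. Unset Printing Implicit Defensive.
Import Order.TTheory GRing.Theory Num.Theory.
Local Open Scope ring_scope.

Section Defs.
Variables (R : realType) (P : finType) (dist : P -> P -> R).

Definition is_metric : Prop :=
  [/\ forall x y, dist x y = 0 <-> x = y,
      forall x y, dist x y = dist y x &
      forall x y z, dist x z <= dist x y + dist y z].

Definition ballX (X : {set P}) (p : P) (r : R) : {set P} :=
  [set x in X | dist p x <= r].

Definition covered_by (p : P) (r : R) (k : nat) : Prop :=
  exists Q : {set P}, (#|Q| <= k)%N /\
    ballX [set: P]%SET p r \subset \bigcup_(q in Q) ballX [set: P]%SET q (r / 2).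

Definition is_doubling_const (lam : nat) : Prop :=
  (forall p r, 0 < r -> covered_by p r lam) /\
  (forall k : nat, (forall p r, 0 < r -> covered_by p r k) -> (lam <= k)%N).

Definition is_doubling_dim (d : R) : Prop :=
  exists lam, is_doubling_const lam /\ d = ln (lam%:R) / ln 2.

(* R_p: the ceil(n/c)-th smallest among the distances from p to all points
   of S (including p itself), n = |S| *)
Definition sepann_Rp (S : {set P}) (c : R) (p : P) : R :=
  let k := `|Num.ceil (#|S|%:R / c)|%N in
  nth 0 (sort <=%R [seq dist p x | x <- enum S]) k.-1.

(* the points p whose iteration stops the repeat loop:
   |ball_S(p, mu R_p)| <= n/2 *)
Definition sepann_good (S : {set P}) (mu c : R) : {set P} :=
  [set p in S | (#|ballX S p (mu * sepann_Rp S c p)|%:R : R) <= #|S|%:R / 2].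

(* Expected running time of SepAnn: each iteration draws p uniformly from S
   and costs Theta(n) (linear-time selection plus a scan); we charge n per
   iteration.  With success probability q = |good|/n per iteration, the loop
   runs exactly k+1 iterations with probability (1-q)^k q. *)
Definition sepann_success_prob (S : {set P}) (mu c : R) : R :=
  #|sepann_good S mu c|%:R / #|S|%:R.

Definition sepann_expected_time (S : {set P}) (mu c : R) : \bar R :=
  let q := sepann_success_prob S mu c in
  (\sum_(0 <= k <oo) ((#|S|%:R * k.+1%:R * (1 - q) ^+ k * q)%:E))%E.

End Defs.

From Pilot Require Import Defs.
From HB Require Import structures.
From mathcomp Require Import all_boot all_order all_algebra.
From mathcomp Require Import all_classical all_reals all_analysis.
From mathcomp Require Import ring lra.

Set Implicit Arguments.
Unset Strict Implicit.
Unset Printing Implicit Defensive.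
Import Order.TTheory GRing.Theory Num.Theory.
Local Open Scope ring_scope.

(* Let k = ceil(n/c) and let R_p be the distance from p to its k-th nearest
   point of S. Take p0 minimising R_p over S and put r = R_p0. A point y with
   dist p0 y <= r has R_y <= 2r, and for 4 mu < 2^m <= 8 mu the ball of radius
   mu R_y around y is covered by lam^m <= (8 mu)^d = c/2 balls of radius
   rho = mu R_y / 2^m < r/2. Each of them holds fewer than k points of S, since
   any of its points x sees all of it within 2 rho < r <= R_x. Hence
   |ball_S(y, mu R_y)| <= (c/2)(k-1) < n/2, so the at least k >= n/c points of
   ball_S(p0, r) all stop the loop: an iteration succeeds with probability
   q >= 1/c, and the expected cost sum_j n (j+1) (1-q)^j q = n/q is at most cn. *)

Lemma card_bigcup_le (T I : finType) (Q : {set I}) (F : I -> {set T}) :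
  (#|\bigcup_(q in Q) F q| <= \sum_(q in Q) #|F q|)%N.
Proof.
elim/big_rec2: _ => [|i n U _ leUn]; first by rewrite cards0.
by rewrite (leq_trans (leq_card_setU _ U).1) ?leq_add2l.
Qed.

Lemma sum_succ_expr_le (R : realDomainType) (x : R) (N : nat) :
  0 <= x <= 1 -> (1 - x) ^+ 2 * \sum_(0 <= k < N) k.+1%:R * x ^+ k <= 1.
Proof.
move=> /andP[x_ge0 x_le1].
have -> : (1 - x) ^+ 2 * \sum_(0 <= k < N) k.+1%:R * x ^+ k =
          1 - x ^+ N * (N.+1%:R - N%:R * x).
  elim: N => [|N IH]; first by rewrite big_geq // expr0; ring.
  by rewrite big_nat_recr //= mulrDr IH -!natr1 !exprS; ring.
rewrite lerBlDr lerDl mulr_ge0 ?exprn_ge0 // subr_ge0 -natr1.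
by rewrite ler_wpDr // ler_piMr.
Qed.

Lemma eseries_geometric_mean_le (R : realType) (a q : R) : 0 <= a -> 0 < q <= 1 ->
  (\sum_(0 <= k <oo) (a * k.+1%:R * (1 - q) ^+ k * q)%:E <= (a / q)%:E)%E.
Proof.
move=> a_ge0 /andP[q_gt0 q_le1].
have q'_range : 0 <= 1 - q <= 1 by rewrite subr_ge0 q_le1 gerBl ltW.
have /andP[q'_ge0 _] := q'_range.
apply: lime_le.
  apply: is_cvg_nneseries => k _ _; rewrite lee_fin.
  by rewrite mulr_ge0 ?(ltW q_gt0) // mulr_ge0 ?exprn_ge0 ?mulr_ge0.
apply: nearW => N; rewrite sumEFin lee_fin.
have -> : \sum_(0 <= k < N) (a * k.+1%:R * (1 - q) ^+ k * q) =
          a * q * \sum_(0 <= k < N) k.+1%:R * (1 - q) ^+ k.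
  by rewrite mulr_sumr; apply: eq_bigr => k _; ring.
have := sum_succ_expr_le N q'_range; rewrite subKr => sum_le.
rewrite ler_pdivlMr //; set T := \sum_(0 <= k < N) _ in sum_le *.
by rewrite -[leRHS]mulr1 (_ : a * q * T * q = a * (q ^+ 2 * T)) ?ler_wpM2l //; ring.
Qed.

Lemma powR_ln_div (R : realType) (b x : R) : ln b != 0 -> 0 < x ->
  b `^ (ln x / ln b) = x.
Proof.
move=> lnb_neq0 x_gt0; rewrite /powR ifF ?divfK ?lnK //.
by apply: contraNF lnb_neq0 => /eqP->; rewrite ln0.
Qed.

Lemma natrX_le_powR_log2 (R : realType) (lam m : nat) (x : R) : 2 ^+ m <= x ->
  (lam ^ m)%:R <= x `^ (ln lam%:R / ln 2).
Proof.
move=> le_2m_x; have ln2_gt0 : 0 < ln (2 : R) by rewrite ln_gt0 ?ltr1n.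
case: lam => [|lam].
  by rewrite ln0 // mul0r powRr0; case: m {le_2m_x} => [|m]; rewrite ?expn0 ?exp0n.
have log_ge0 : 0 <= ln lam.+1%:R / ln (2 : R) by rewrite divr_ge0 ?ln_ge0 ?ler1n ?ltW.
rewrite natrX -[lam.+1%:R in leLHS](@powR_ln_div _ 2) ?gt_eqF ?ltr0n //.
rewrite -powR_mulrn ?powR_ge0 // powRAC powR_mulrn //.
have two_m_ge0 : 0 <= (2 : R) ^+ m by rewrite exprn_ge0.
by rewrite ge0_ler_powR // nnegrE // (le_trans two_m_ge0).
Qed.

Lemma exists_pow2_between (R : archiRealFieldType) (x : R) : 1 <= 2 * x ->
  exists m, x < 2 ^+ m <= 2 * x.
Proof.
move=> x_ge; have ex_m : exists m, x < 2 ^+ m.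
  exists (Num.trunc x).+1; apply: lt_le_trans (truncnS_gt _) _.
  by rewrite -natrX ler_nat ltnW // ltn_expl.
case: (ex_minnP ex_m) => m x_lt min_m; exists m; rewrite x_lt /=.
case: m x_lt min_m => [|m] _ min_m; first by rewrite expr0.
rewrite exprS ler_pM2l ?ltr0n // leNgt; apply/negP => /min_m.
by rewrite ltnn.
Qed.

Lemma covered_by_iter (R : realType) (P : finType) (dist : P -> P -> R) (lam : nat) :
  (forall p r, 0 < r -> Defs.covered_by dist p r lam) ->
  forall m p r, 0 < r -> exists2 Q : {set P}, (#|Q| <= lam ^ m)%N &
    ballX dist [set: P] p r \subset \bigcup_(q in Q) ballX dist [set: P] q (r / 2 ^+ m).
Proof.
move=> cover_lam; elim=> [|m IH] p r r_gt0.
  exists [set p]; first by rewrite cards1.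
  by rewrite divr1; apply: bigcup_max (set11 p) _.
have [Q Q_le coverQ] := IH p r r_gt0.
have rm_gt0 : 0 < r / 2 ^+ m by rewrite divr_gt0 ?exprn_gt0.
have [f f_cover] := choice (fun q => cover_lam q _ rm_gt0).
exists (\bigcup_(q in Q) f q).
  apply: leq_trans (card_bigcup_le Q f) _; rewrite expnSr.
  apply: leq_trans (leq_mul Q_le (leqnn lam)); rewrite -sum_nat_const.
  by apply: leq_sum => q _; case: (f_cover q).
apply/fintype.subsetP => x /(fintype.subsetP coverQ)/bigcupP[q qQ].
move/(fintype.subsetP (f_cover q).2)/bigcupP => [q' q'f xq'].
apply/bigcupP; exists q'; first by apply/bigcupP; exists q.
by rewrite exprSr invfM mulrA.
Qed.

Section Balls.
Variables (R : realType) (P : finType) (dist : P -> P -> R).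
Implicit Types (S Q : {set P}) (p x y : P) (k : nat) (a b r s t : R).

Definition kth_dist S p k : R :=
  nth 0 (sort <=%R [seq dist p x | x <- enum S]) k.-1.

Lemma card_ballX_count S p t :
  #|ballX dist S p t| = count (<= t)%R (sort <=%R [seq dist p x | x <- enum S]).
Proof.
rewrite (permP (permEl (perm_sort _ _))) count_map -size_filter.
rewrite -(card_uniqP _); last by rewrite filter_uniq // enum_uniq.
by apply: eq_card => x; rewrite !inE mem_filter mem_enum andbC.
Qed.

Let sort_dist_sorted S p := sort_sorted (@le_total _ R) [seq dist p x | x <- enum S].

Lemma card_ballX_kth_dist S p k : (0 < k <= #|S|)%N ->
  (k <= #|ballX dist S p (kth_dist S p k)|)%N.
Proof.
case: k => [|k] //= k_lt; rewrite card_ballX_count leqNgt ltnS.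
apply/negP => cnt_le.
have := nth_count_gt 0 (sort_dist_sorted S p) (i := k) (x := kth_dist S p k.+1).
by rewrite cnt_le size_sort size_map -cardE k_lt ltxx => /(_ isT).
Qed.

Lemma card_ballX_lt_kth_dist S p k t : (0 < k)%N -> t < kth_dist S p k ->
  (#|ballX dist S p t| < k)%N.
Proof.
case: k => [|k] // _ t_lt; rewrite card_ballX_count ltnS leqNgt.
by apply/negP => /(nth_count_le 0 (sort_dist_sorted S p)); rewrite leNgt t_lt.
Qed.

Lemma kth_dist_le S p k t : (0 < k)%N -> (k <= #|ballX dist S p t|)%N ->
  kth_dist S p k <= t.
Proof.
move=> k_gt0 k_le; rewrite leNgt; apply/negP => /(card_ballX_lt_kth_dist k_gt0).
by rewrite ltnNge k_le.
Qed.

Lemma card_ballX_cover S Q p r s :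
  ballX dist [set: P] p r \subset \bigcup_(q in Q) ballX dist [set: P] q s ->
  (#|ballX dist S p r| <= \sum_(q in Q) #|ballX dist S q s|)%N.
Proof.
move=> coverQ; apply: leq_trans (card_bigcup_le Q _); apply: subset_leq_card.
apply/fintype.subsetP => x; rewrite inE => /andP[xS d_px].
have /(fintype.subsetP coverQ)/bigcupP[q qQ] : x \in ballX dist [set: P] p r.
  by rewrite !inE.
by rewrite !inE => d_qx; apply/bigcupP; exists q; rewrite // inE xS.
Qed.

Hypothesis dist_metric : is_metric dist.

Lemma dist_ge0 x y : 0 <= dist x y.
Proof.
case: dist_metric => dist0 distC dist_tri.
have := dist_tri x y x; rewrite (distC y x) (proj2 (dist0 x x) erefl).
by rewrite -mulr2n pmulrn_lge0.
Qed.

Lemma subset_ballX S p y a b : dist p y <= a ->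
  ballX dist S p b \subset ballX dist S y (a + b).
Proof.
case: dist_metric => _ distC dist_tri d_py; apply/fintype.subsetP => z; rewrite !inE.
case/andP => -> d_pz /=; rewrite (le_trans (dist_tri y p z)) // distC.
exact: lerD.
Qed.

Lemma kth_dist_gt0 S p k : p \in S -> (1 < k <= #|S|)%N -> 0 < kth_dist S p k.
Proof.
move=> pS /andP[k_gt1 k_le]; rewrite ltNge; apply/negP => kth_le0.
have sub_p : ballX dist S p (kth_dist S p k) \subset [set p].
  apply/fintype.subsetP => x; rewrite !inE => /andP[_ d_px].
  case: dist_metric => dist0 _ _; apply/eqP/esym/dist0/eqP.
  by rewrite eq_le dist_ge0 (le_trans d_px).
have k_range : (0 < k <= #|S|)%N by rewrite ltnW.
have := leq_trans (card_ballX_kth_dist p k_range) (subset_leq_card sub_p).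
by rewrite cards1 leqNgt k_gt1.
Qed.

End Balls.

Section Separation.
Variables (R : realType) (P : finType) (dist : P -> P -> R) (S : {set P}) (k : nat).
Hypotheses (dist_metric : is_metric dist) (k_gt1 : (1 < k)%N) (k_le : (k <= #|S|)%N).

Let k_gt0 : (0 < k)%N := ltnW k_gt1.
Let k_range : (0 < k <= #|S|)%N := introT andP (conj k_gt0 k_le).

Lemma card_ballX_lt_kth_dist_min q rho :
  (forall x, x \in S -> 2 * rho < kth_dist dist S x k) ->
  (#|ballX dist S q rho| < k)%N.
Proof.
move=> rho_lt; have [->|[x x_in]] := set_0Vmem (ballX dist S q rho).
  by rewrite cards0.
move: (x_in); rewrite inE => /andP[xS d_qx].
apply: leq_ltn_trans (subset_leq_card (subset_ballX dist_metric S rho d_qx)) _.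
by apply: card_ballX_lt_kth_dist k_gt0 _; rewrite -mulr2n -mulr_natl rho_lt.
Qed.

Variables (lam m : nat) (mu : R).
Hypotheses (cover_lam : forall p r, 0 < r -> Defs.covered_by dist p r lam)
  (mu_gt0 : 0 < mu) (mu_lt : 4 * mu < 2 ^+ m).

Lemma card_ballX_near_kth_dist_min p0 y :
  p0 \in S -> (forall x, x \in S -> kth_dist dist S p0 k <= kth_dist dist S x k) ->
  y \in ballX dist S p0 (kth_dist dist S p0 k) ->
  (#|ballX dist S y (mu * kth_dist dist S y k)| <= lam ^ m * k.-1)%N.
Proof.
set r := kth_dist dist S p0 k => p0S r_min; rewrite inE => /andP[yS d_p0y].
have k_gt1_le : (1 < k <= #|S|)%N by rewrite k_gt1.
have r_gt0 : 0 < r := kth_dist_gt0 dist_metric p0S k_gt1_le.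
have kth_y_le : kth_dist dist S y k <= r + r.
  apply: kth_dist_le k_gt0 _.
  apply: leq_trans (card_ballX_kth_dist dist p0 k_range) (subset_leq_card _).
  by apply: subset_ballX => //; case: dist_metric => _ -> _.
have Ry_gt0 : 0 < mu * kth_dist dist S y k.
  by rewrite mulr_gt0 // kth_dist_gt0.
have [Q Q_le coverQ] := covered_by_iter cover_lam m y Ry_gt0.
apply: leq_trans (card_ballX_cover S coverQ) _.
apply: (@leq_trans (\sum_(q in Q) k.-1)).
  apply: leq_sum => q _; rewrite -ltnS prednK //.
  apply: card_ballX_lt_kth_dist_min => x xS; apply: lt_le_trans (r_min x xS).
  rewrite mulrA ltr_pdivrMr ?exprn_gt0 //.
  have Ry_le := ler_wpM2l (ltW mu_gt0) kth_y_le.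
  have mu_r_lt : 4 * mu * r < 2 ^+ m * r by rewrite ltr_pM2r.
  lra.
by rewrite sum_nat_const leq_mul2r Q_le orbT.
Qed.

Lemma card_sparse_ballX_ge :
  (k <= #|[set y in S | #|ballX dist S y (mu * kth_dist dist S y k)| <= lam ^ m * k.-1]|)%N.
Proof.
have [x0 x0S] := card_gt0P (leq_trans k_gt0 k_le).
have [p0 p0S p0_min] := arg_minP (fun x => kth_dist dist S x k) x0S.
apply: leq_trans (card_ballX_kth_dist dist p0 k_range) (subset_leq_card _).
apply/fintype.subsetP => y y_near; rewrite inE.
rewrite (card_ballX_near_kth_dist_min p0S p0_min y_near) andbT.
by move: y_near; rewrite inE => /andP[].
Qed.

End Separation.

Definition sepann_rank (R : archiNumDomainType) (n : nat) (c : R) : nat :=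
  `|Num.ceil (n%:R / c)|%N.

Lemma sepann_RpE (R : realType) (P : finType) (dist : P -> P -> R) S c p :
  sepann_Rp dist S c p = kth_dist dist S p (sepann_rank #|S| c).
Proof. by []. Qed.

Lemma sepann_rank_bounds (R : archiRealFieldType) (n : nat) (c : R) :
  1 <= c -> c + 1 <= n%:R ->
  let k := sepann_rank n c in
  [/\ (1 < k)%N, (k <= n)%N, n%:R / c <= k%:R & k.-1%:R < n%:R / c].
Proof.
move=> c_ge1 cn k; have c_gt0 : 0 < c by apply: lt_le_trans c_ge1.
set x := n%:R / c.
have x_gt1 : 1 < x by rewrite ltr_pdivlMr // mul1r; lra.
have x_le_n : x <= n%:R by rewrite ler_pdivrMr // ler_peMr //; lra.
have kZ : k%:Z = Num.ceil x by rewrite /k /sepann_rank gez0_abs // ceil_ge0 -/x; lra.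
have kR : k%:R = (Num.ceil x)%:~R :> R by rewrite -kZ -pmulrn.
have k_gt1 : (1 < k)%N by rewrite -ltz_nat kZ ceil_gt_int.
split=> //.
- by rewrite -lez_nat kZ ceil_le_int -pmulrn.
- by rewrite kR ceil_ge.
- rewrite -subn1 natrB ?(ltnW k_gt1) // kR.
  by have := ceilB1_lt x; rewrite rmorphB.
Qed.

Lemma ge1_powR_log2 (R : realType) (lam : nat) (x : R) : 1 <= x ->
  1 <= x `^ (ln lam%:R / ln 2).
Proof. by rewrite -[1 <= x]/(2 ^+ 0 <= x) => /(natrX_le_powR_log2 lam). Qed.

Section SepAnn.
Variables (R : realType) (P : finType) (dist : P -> P -> R) (S : {set P}) (mu c : R).
Hypotheses (dist_metric : is_metric dist) (c_ge1 : 1 <= c) (cn : c + 1 <= #|S|%:R).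

Let k := sepann_rank #|S| c.

Lemma sepann_Rp_spec p : p \in S ->
  0 < sepann_Rp dist S c p /\ #|S|%:R / c <= #|ballX dist S p (sepann_Rp dist S c p)|%:R.
Proof.
move=> pS; have [k_gt1 k_le n_le_k _] := sepann_rank_bounds c_ge1 cn; split.
  by rewrite sepann_RpE kth_dist_gt0 // k_gt1.
by apply: le_trans n_le_k _; rewrite ler_nat card_ballX_kth_dist // ltnW.
Qed.

Lemma card_sepann_good_ge (lam : nat) :
  (forall p r, 0 < r -> Defs.covered_by dist p r lam) -> 1 <= mu ->
  c = 2 * (8 * mu) `^ (ln lam%:R / ln 2) ->
  #|S|%:R / c <= #|sepann_good dist S mu c|%:R.
Proof.
move=> cover_lam mu_ge1 cE; have [k_gt1 k_le n_le_k k_lt] := sepann_rank_bounds c_ge1 cn.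
have [m /andP[mu_lt m_le]] : exists m, 4 * mu < 2 ^+ m <= 2 * (4 * mu).
  by apply: exists_pow2_between; lra.
have lam_m_le : (lam ^ m)%:R <= c / 2.
  rewrite cE mulrC mulKf ?pnatr_eq0 // natrX_le_powR_log2 //.
  by rewrite (_ : 8 * mu = 2 * (4 * mu)) //; ring.
have mu_gt0 : 0 < mu by lra.
apply: le_trans n_le_k _; rewrite ler_nat.
apply: leq_trans (card_sparse_ballX_ge dist_metric k_gt1 k_le cover_lam mu_gt0 mu_lt) _.
apply: subset_leq_card; apply/fintype.subsetP => y.
rewrite !inE sepann_RpE => /andP[-> /= y_sparse].
apply: le_trans (_ : (lam ^ m * k.-1)%:R <= _); first by rewrite ler_nat.
rewrite natrM (_ : #|S|%:R / 2 = c / 2 * (#|S|%:R / c)).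
  by rewrite ler_pM // ltW.
by field; rewrite gt_eqF // (lt_le_trans ltr01 c_ge1).
Qed.

End SepAnn.

Theorem lemma3 (R : realType) :
  exists K : R, 0 < K /\
  forall (P : finType) (dist : P -> P -> R) (S : {set P}) (d mu c : R),
    is_metric dist ->
    is_doubling_dim dist d ->
    (0 < #|S|)%N ->
    1 <= mu ->
    c = 2 * (8 * mu) `^ d ->
    c + 1 <= #|S|%:R ->
    (* the loop terminates with probability one ... *)
    0 < sepann_success_prob dist S mu c /\
    (* ... and the expected running time is O(c n) *)
    (sepann_expected_time dist S mu c <= (K * c * #|S|%:R)%:E)%E /\
    (* every possible output (p, R' = R_p) has the required properties *)
    (forall p, p \in sepann_good dist S mu c ->
       let R' := sepann_Rp dist S c p in
       [/\ p \in S, 0 < R',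
           #|S|%:R / c <= #|ballX dist S p R'|%:R &
           (#|ballX dist S p (mu * R')|%:R : R) <= #|S|%:R / 2]).
Proof.
exists 1; split=> // P dist S d mu c dist_metric [lam [[cover_lam _] ->]] _ mu_ge1 cE cn.
have c_ge1 : 1 <= c.
  have : 1 <= 8 * mu by lra.
  by move/(ge1_powR_log2 lam); rewrite cE; lra.
have n_gt0 : 0 < #|S|%:R :> R by lra.
have good_ge := card_sepann_good_ge dist_metric c_ge1 cn cover_lam mu_ge1 cE.
have good_le : #|sepann_good dist S mu c|%:R <= #|S|%:R :> R.
  by rewrite ler_nat subset_leq_card //; apply/fintype.subsetP => p; rewrite inE => /andP[].
set q := sepann_success_prob dist S mu c.
have q_ge : c^-1 <= q by rewrite /q /sepann_success_prob ler_pdivlMr // mulrC.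
have q_gt0 : 0 < q by apply: lt_le_trans q_ge; rewrite invr_gt0; lra.
have q_le1 : q <= 1 by rewrite /q /sepann_success_prob ler_pdivrMr // mul1r.
split=> //; split.
  apply: le_trans (eseries_geometric_mean_le (ltW n_gt0) _) _; first by rewrite q_gt0.
  have qc_ge1 : 1 <= c * q by rewrite -ler_pdivrMl ?mulr1 //; lra.
  rewrite -/q lee_fin mul1r ler_pdivrMr // mulrAC -[leLHS]mul1r.
  by apply: ler_wpM2r; first exact: ltW.
move=> p; rewrite inE => /andP[pS ball_le] /=.
by have [] := sepann_Rp_spec dist_metric c_ge1 cn pS.
Qed.
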